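(* Let $G$ be a group, $K$ a zero-sum-free semifield, and $V$ a representation of $G$ over $K$. Then $V$ is indecomposable if and only if $G$ acts transitively on the set of basis lines of $V$. In addition, any representation $V$ of $G$ over $K$ may be uniquely decomposed as a direct sum of indecomposable representations.
   Context: All semirings are commutative. A semifield is a semiring whose nonzero elements form a multiplicative group; it is zero-sum-free if $a+b=0$ implies $a=b=0$. A representation of $G$ over $K$ is a $K$-linear action of $G$ on a free module $K^n$; a subrepresentation is a $G$-stable submodule; $V$ is indecomposable if it cannot be written as a direct sum of nontrivial subrepresentations. A basis line of a free $K$-module is a submodule spanned by a single vector of a basis; the set of basis lines does not depend on the basis, and $G$ acts on it by $g\cdot\mathrm{span}(v)=\mathrm{span}(gv)$. *)

From HB Require Import structures.
From mathcomp Require Import all_boot all_algebra.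
Set Implicit Arguments. Unset Strict Implicit. Unset Printing Implicit Defensive.
Import GRing.Theory.
Local Open Scope ring_scope.

Definition semifield (K : comNzSemiRingType) : Prop :=
  forall x : K, x != 0 -> exists y : K, x * y = 1.

Definition zero_sum_free (K : comNzSemiRingType) : Prop :=
  forall a b : K, a + b = 0 -> a = 0 /\ b = 0.

Definition is_group (G : Type) (mul : G -> G -> G) (one : G) (inv : G -> G) : Prop :=
  [/\ (forall x y z, mul x (mul y z) = mul (mul x y) z),
      (forall x, mul one x = x), (forall x, mul x one = x),
      (forall x, mul (inv x) x = one) & (forall x, mul x (inv x) = one)].

(* A representation: a K-linear action of G on the free module K^n = 'rV[K]_n. *)
Definition is_representation (K : comNzSemiRingType) (G : Type) (mul : G -> G -> G)
    (one : G) (n : nat) (act : G -> 'rV[K]_n -> 'rV[K]_n) : Prop :=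
  [/\ (forall v, act one v = v),
      (forall g h v, act (mul g h) v = act g (act h v)),
      (forall g v w, act g (v + w) = act g v + act g w) &
      (forall g (k : K) v, act g (k *: v) = k *: act g v)].

Definition is_submodule (K : comNzSemiRingType) (n : nat) (W : 'rV[K]_n -> Prop) : Prop :=
  [/\ W 0, (forall v w, W v -> W w -> W (v + w)) & (forall (k : K) v, W v -> W (k *: v))].

Definition is_subrep (K : comNzSemiRingType) (G : Type) (n : nat)
    (act : G -> 'rV[K]_n -> 'rV[K]_n) (W : 'rV[K]_n -> Prop) : Prop :=
  is_submodule W /\ (forall g v, W v -> W (act g v)).

Definition nonzero_sub (K : comNzSemiRingType) (n : nat) (W : 'rV[K]_n -> Prop) : Prop :=
  exists v, W v /\ v != 0.

Definition direct_sum2 (K : comNzSemiRingType) (n : nat) (W W1 W2 : 'rV[K]_n -> Prop) : Prop :=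
  [/\ (forall v, W1 v -> W v), (forall v, W2 v -> W v),
      (forall v, W v -> exists a b, [/\ W1 a, W2 b & v = a + b]) &
      (forall a b a' b', W1 a -> W2 b -> W1 a' -> W2 b' -> a + b = a' + b' -> a = a' /\ b = b')].

Definition direct_sum (K : comNzSemiRingType) (n k : nat) (W : 'rV[K]_n -> Prop)
    (Ws : 'I_k -> 'rV[K]_n -> Prop) : Prop :=
  [/\ (forall j v, Ws j v -> W v),
      (forall v, W v -> exists w : 'I_k -> 'rV[K]_n, (forall j, Ws j (w j)) /\ v = \sum_(j < k) w j) &
      (forall w w' : 'I_k -> 'rV[K]_n, (forall j, Ws j (w j)) -> (forall j, Ws j (w' j)) ->
          \sum_(j < k) w j = \sum_(j < k) w' j -> forall j, w j = w' j)].

Definition indecomposable (K : comNzSemiRingType) (G : Type) (n : nat)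
    (act : G -> 'rV[K]_n -> 'rV[K]_n) (W : 'rV[K]_n -> Prop) : Prop :=
  [/\ is_subrep act W, nonzero_sub W &
      ~ (exists W1 W2, [/\ is_subrep act W1, is_subrep act W2, nonzero_sub W1,
                          nonzero_sub W2 & direct_sum2 W W1 W2])].

Definition fullV (K : comNzSemiRingType) (n : nat) : 'rV[K]_n -> Prop := fun _ => True.

Definition is_basis (K : comNzSemiRingType) (n m : nat) (b : 'I_m -> 'rV[K]_n) : Prop :=
  (forall v, exists c : 'I_m -> K, v = \sum_(i < m) c i *: b i) /\
  (forall c c' : 'I_m -> K, \sum_(i < m) c i *: b i = \sum_(i < m) c' i *: b i ->
     forall i, c i = c' i).

Definition is_basis_line (K : comNzSemiRingType) (n : nat) (L : 'rV[K]_n -> Prop) : Prop :=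
  exists m (b : 'I_m -> 'rV[K]_n) (i : 'I_m),
    is_basis b /\ forall v, L v <-> exists k : K, v = k *: b i.

Definition act_line (K : comNzSemiRingType) (G : Type) (n : nat)
    (act : G -> 'rV[K]_n -> 'rV[K]_n) (g : G) (L : 'rV[K]_n -> Prop) : 'rV[K]_n -> Prop :=
  fun v => exists w, L w /\ v = act g w.

Definition transitive_on_basis_lines (K : comNzSemiRingType) (G : Type) (n : nat)
    (act : G -> 'rV[K]_n -> 'rV[K]_n) : Prop :=
  (exists L : 'rV[K]_n -> Prop, is_basis_line L) /\
  forall L1 L2, is_basis_line L1 -> is_basis_line L2 ->
    exists g, forall v, L2 v <-> act_line act g L1 v.

(* Over a zero-sum-free semifield nothing cancels: a sum vanishes only if every
   term does, and a product only if a factor does.  Hence a matrix with a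
   two-sided inverse is monomial, i.e. each row has exactly one nonzero entry.
   Applied to a basis of K^n this shows that the basis lines are exactly the
   coordinate lines K e_j; applied to the action of g it shows that g maps each
   e_j to a nonzero multiple of e_(pi_g j), so G permutes the coordinates.  The
   same absence of cancellation forces every direct summand of a coordinate
   submodule to be a coordinate submodule, so direct sum decompositions of V into
   subrepresentations are partitions of the coordinates into G-stable sets, and
   the indecomposable summands are exactly those spanned by the G-orbits. *)

From HB Require Import structures.
From mathcomp Require Import all_boot all_algebra.
From mathcomp Require Import boolp.
Set Implicit Arguments. Unset Strict Implicit. Unset Printing Implicit Defensive.
Import GRing.Theory.
Local Open Scope ring_scope.

Section Semifield.
Variable K : comNzSemiRingType.
Hypotheses (sfK : semifield K) (zsfK : zero_sum_free K).

Lemma semifield_mulf_eq0 (x y : K) : (x * y == 0) = (x == 0) || (y == 0).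
Proof.
apply/idP/idP => [/eqP xy0|/orP[]/eqP->]; rewrite ?mul0r ?mulr0 //.
have [//|/sfK[x' xx']] := eqVneq x 0.
by rewrite -[y]mul1r -xx' mulrAC xy0 mul0r eqxx orbT.
Qed.

Lemma zsf_sum_eq0 (I : finType) (P : pred I) (F : I -> K) :
  \sum_(i | P i) F i = 0 -> {in P, forall i, F i = 0}.
Proof. by move=> + i Pi; rewrite (bigD1 i) // => /zsfK[]. Qed.

Lemma monomial_of_invertible m p (A : 'M[K]_(m, p)) (B : 'M[K]_(p, m)) :
  A *m B = 1%:M -> B *m A = 1%:M ->
  forall i, exists j, forall l, (A i l != 0) = (l == j).
Proof.
move=> AB BA i.
have [j ABji] : exists j, A i j * B j i != 0.
  apply/existsP; apply: contraTT (oner_neq0 K) => /existsPn ABi0.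
  have /matrixP/(_ i i) := AB; rewrite !mxE eqxx mulr1n => <-.
  by rewrite big1 ?eqxx // => j _; apply/eqP/negbNE/ABi0.
exists j => l; apply/idP/eqP => [Ail|->]; last first.
  by apply: contraNneq ABji => ->; rewrite mul0r.
apply: contraNeq Ail => lj.
(* The (j, l) entry of B *m A is a vanishing sum containing B j i * A i l. *)
have /matrixP/(_ j l) := BA; rewrite !mxE eq_sym (negPf lj) mulr0n.
move=> /zsf_sum_eq0/(_ i isT)/eqP; rewrite semifield_mulf_eq0 => /orP[Bji0|/eqP//].
by move: ABji; rewrite (eqP Bji0) mulr0 eqxx.
Qed.

Variable n : nat.
Implicit Types (v w : 'rV[K]_n) (A B J : {set 'I_n}) (W : 'rV[K]_n -> Prop).

Lemma row_deltaE (j l : 'I_n) : ('e_j : 'rV[K]_n) 0 l = (l == j)%:R.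
Proof. by rewrite mxE eqxx. Qed.

Lemma row_delta_neq0 (j : 'I_n) : ('e_j : 'rV[K]_n) != 0.
Proof. by apply/negP => /eqP/rowP/(_ j)/eqP; rewrite row_deltaE eqxx mxE oner_eq0. Qed.

Lemma row_neq0P v : v != 0 -> exists l, v 0 l != 0.
Proof.
move=> /eqP v0; apply/existsP; apply: contra_notT v0 => /existsPn v0.
by apply/rowP => l; rewrite mxE; exact/eqP/negbNE/v0.
Qed.

Lemma row_single_support v (j : 'I_n) : (forall l, l != j -> v 0 l = 0) -> v = v 0 j *: 'e_j.
Proof.
move=> v0; apply/rowP => l; rewrite mxE row_deltaE.
by case: eqP => [->|/eqP lj]; rewrite ?mulr1 // mulr0 v0.
Qed.

Lemma submod_sum W (I : finType) (F : I -> 'rV[K]_n) :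
  is_submodule W -> (forall i, W (F i)) -> W (\sum_i F i).
Proof. by case=> W0 WD _ WF; elim/big_rec: _ => // i x _; apply: WD. Qed.

Lemma submod_scaleK W (c : K) v : is_submodule W -> c != 0 -> W (c *: v) -> W v.
Proof.
by case=> _ _ WZ /sfK[c' cc'] /(WZ c'); rewrite scalerA mulrC cc' scale1r.
Qed.

Lemma submod_of_deltas W v : is_submodule W -> (forall l, v 0 l != 0 -> W 'e_l) -> W v.
Proof.
move=> Wsub Wv; rewrite [v]row_sum_delta; apply: submod_sum => // l.
have [->|/Wv] := eqVneq (v 0 l) 0; case: Wsub => // W0 _ WZ; first by rewrite scale0r.
exact: WZ.
Qed.

Lemma delta_in_summand (I : finType) (Ws : I -> 'rV[K]_n -> Prop) (w : I -> 'rV[K]_n)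
    (j : 'I_n) :
  (forall i, is_submodule (Ws i)) -> (forall i, Ws i (w i)) -> \sum_i w i = 'e_j ->
  exists i, Ws i 'e_j.
Proof.
move=> Wsub Ww /rowP wj.
have w0 i l : l != j -> w i 0 l = 0.
  by move=> lj; move: (wj l); rewrite summxE row_deltaE (negPf lj) => /zsf_sum_eq0->.
have [i wij] : exists i, w i 0 j != 0.
  apply/existsP; apply: contraTT (oner_neq0 K) => /existsPn wj0.
  move: (wj j); rewrite summxE row_deltaE eqxx mulr1n big1 => [<-|i _].
    by rewrite eqxx.
  exact/eqP/negbNE/wj0.
by exists i; apply: (submod_scaleK (Wsub i) wij); rewrite -(row_single_support (w0 i)).
Qed.

Definition coord_submod J : 'rV[K]_n -> Prop := fun v => forall l, v 0 l != 0 -> l \in J.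

Definition coord_proj J v : 'rV[K]_n := \row_l (if l \in J then v 0 l else 0).

Lemma coord_submod_entry0 J v (l : 'I_n) : coord_submod J v -> l \notin J -> v 0 l = 0.
Proof. by move=> Jv; apply: contraNeq => /Jv. Qed.

Lemma coord_submodule J : is_submodule (coord_submod J).
Proof.
split=> [l|v w Jv Jw l|c v Jv l]; rewrite !mxE ?eqxx //; apply: contraR => lJ.
- by rewrite !(coord_submod_entry0 _ lJ) ?addr0.
- by rewrite (coord_submod_entry0 Jv lJ) mulr0.
Qed.

Lemma coord_submod_delta J (j : 'I_n) : coord_submod J 'e_j <-> j \in J.
Proof.
split=> [/(_ j)|Jj l]; first by rewrite row_deltaE eqxx oner_neq0; apply.
rewrite row_deltaE; apply: contraR => lJ.
by have /negPf-> : l != j by apply: contraNneq lJ => ->.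
Qed.

Lemma coord_submod_nonzero J (j : 'I_n) : j \in J -> nonzero_sub (coord_submod J).
Proof. by move=> Jj; exists 'e_j; split; [apply/coord_submod_delta | apply: row_delta_neq0]. Qed.

Lemma coord_submodS A B v : A \subset B -> coord_submod A v -> coord_submod B v.
Proof. by move=> /subsetP AB Av l /Av /AB. Qed.

Lemma coord_proj_submod A B v : coord_submod A v -> coord_submod (A :&: B) (coord_proj B v).
Proof. by move=> Av l; rewrite mxE inE; case: (l \in B) => [/Av->|]; rewrite ?eqxx. Qed.

Lemma coord_proj_id A B v : coord_submod A v -> A \subset B -> coord_proj B v = v.
Proof.
move=> Av /subsetP AB; apply/rowP => l; rewrite mxE.
by case: ifP => // lB; apply/esym/(coord_submod_entry0 Av); apply: contraFN lB => /AB.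
Qed.

Lemma coord_proj0 A B v : coord_submod A v -> [disjoint A & B] -> coord_proj B v = 0.
Proof.
move=> Av AB; apply/rowP => l; rewrite !mxE.
by case: ifP => // lB; apply: (coord_submod_entry0 Av); rewrite (disjointFl AB lB).
Qed.

Lemma coord_projD B : {morph coord_proj B : v w / v + w}.
Proof. by move=> v w; apply/rowP => l; rewrite !mxE; case: ifP; rewrite ?addr0. Qed.

Lemma coord_proj_sum B (I : finType) (F : I -> 'rV[K]_n) :
  coord_proj B (\sum_i F i) = \sum_i coord_proj B (F i).
Proof.
apply/rowP => l; rewrite mxE !summxE; under [RHS]eq_bigr do rewrite mxE.
by case: ifP => // _; rewrite big1.
Qed.

Lemma coord_proj_splitC B v : v = coord_proj B v + coord_proj (~: B) v.
Proof. by apply/rowP => l; rewrite !mxE inE; case: (l \in B); rewrite ?addr0 ?add0r. Qed.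

Lemma sum_coord_proj_fibers k (part : 'I_n -> 'I_k) v :
  \sum_j coord_proj [set l | part l == j] v = v.
Proof.
apply/rowP => l; rewrite summxE (bigD1 (part l)) //= big1 => [|j jl].
  by rewrite !mxE inE eqxx addr0.
by rewrite !mxE inE eq_sym (negPf jl).
Qed.

Lemma direct_sum2_coord J B :
  direct_sum2 (coord_submod J) (coord_submod (J :&: B)) (coord_submod (J :&: ~: B)).
Proof.
have projB x y : coord_submod (J :&: B) x -> coord_submod (J :&: ~: B) y ->
    coord_proj B (x + y) = x /\ coord_proj (~: B) (x + y) = y.
  move=> Jx Jy; rewrite !coord_projD.
  rewrite (coord_proj_id (B := B) Jx) ?subsetIr // (coord_proj_id (B := ~: B) Jy) ?subsetIr //.
  rewrite (coord_proj0 (B := B) Jy) ?(coord_proj0 (B := ~: B) Jx) ?addr0 ?add0r //.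
    by rewrite disjoints_subset setCK subsetIr.
  by rewrite disjoints_subset subsetIr.
split=> [v|v|v Jv|a b a' b' Ja Jb Ja' Jb' ab].
- exact/coord_submodS/subsetIl.
- exact/coord_submodS/subsetIl.
- exists (coord_proj B v), (coord_proj (~: B) v).
  by split; rewrite -?coord_proj_splitC //; apply: coord_proj_submod.
- have [pa pb] := projB _ _ Ja Jb; have [pa' pb'] := projB _ _ Ja' Jb'.
  by split; [rewrite -pa -pa' ab | rewrite -pb -pb' ab].
Qed.

Lemma direct_sum_coord k (part : 'I_n -> 'I_k) :
  direct_sum (@fullV K n) (fun j => coord_submod [set l | part l == j]).
Proof.
split=> [//|v _|w w' Pw Pw' ww' j].
  exists (fun j => coord_proj [set l | part l == j] v); rewrite sum_coord_proj_fibers.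
  by split=> // j; rewrite -[X in coord_submod X]setTI; apply: coord_proj_submod.
have projj x : (forall i, coord_submod [set l | part l == i] (x i)) ->
    coord_proj [set l | part l == j] (\sum_i x i) = x j.
  move=> Px; rewrite coord_proj_sum (bigD1 j) //= (coord_proj_id (Px j)) //.
  rewrite big1 ?addr0 // => i ij; apply: (coord_proj0 (Px i)).
  by rewrite disjoints_subset; apply/subsetP => l; rewrite !inE => /eqP->.
by rewrite -projj // ww' projj.
Qed.

Lemma delta_in_summand2 W1 W2 a b (j : 'I_n) : is_submodule W1 -> is_submodule W2 ->
  W1 a -> W2 b -> a + b = 'e_j -> W1 'e_j \/ W2 'e_j.
Proof.
move=> W1sub W2sub W1a W2b ab.
have [[] Wj] : exists c : bool, (if c then W1 else W2) 'e_j.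
  apply: (@delta_in_summand _ (fun c : bool => if c then W1 else W2)
    (fun c : bool => if c then a else b)) => [[]|[]|] //.
  by rewrite big_bool.
- by left.
- by right.
Qed.

Section DirectSum.
Variables (k : nat) (Ws : 'I_k -> 'rV[K]_n -> Prop).
Hypotheses (Wsub : forall j, is_submodule (Ws j)) (dsW : direct_sum (@fullV K n) Ws).

Lemma direct_sum_delta (l : 'I_n) : exists j, Ws j 'e_l.
Proof. by have [_ dec _] := dsW; have [w [Ww /esym]] := dec 'e_l I; apply: delta_in_summand. Qed.

Lemma direct_sum_coord_summands :
  exists owner : 'I_n -> 'I_k, forall j, Ws j = coord_submod [set l | owner l == j].
Proof.
have [owner Wowner] := choice direct_sum_delta.
exists owner => j; apply/funext => v; apply/propext; split=> [Wv|Jv]; last first.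
  by apply: submod_of_deltas => // l /Jv; rewrite inE => /eqP <-.
have [_ _ uniq] := dsW.
pose u j' := coord_proj [set l | owner l == j'] v.
have Wu j' : Ws j' (u j').
  apply: submod_of_deltas => // l; rewrite mxE inE.
  by case: ifP => [/eqP <- _|_]; [apply: Wowner | rewrite eqxx].
pose single j' := if j' == j then v else 0.
have Wsingle j' : Ws j' (single j') by rewrite /single; case: eqP => [->|_] //; case: (Wsub j').
have := uniq _ _ Wu Wsingle; rewrite sum_coord_proj_fibers -big_mkcond big_pred1_eq.
move=> /(_ erefl j); rewrite /single eqxx => <-.
by rewrite -[X in coord_submod X]setTI; apply: coord_proj_submod.
Qed.

End DirectSum.

Definition line v : 'rV[K]_n -> Prop := fun w => exists c : K, w = c *: v.

Lemma line_scale (c : K) v : c != 0 -> line (c *: v) = line v.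
Proof.
move=> /sfK[c' cc']; apply/funext => w; apply/propext.
split=> [[d ->]|[d ->]]; first by exists (d * c); rewrite scalerA.
by exists (d * c'); rewrite scalerA -mulrA (mulrC c') cc' mulr1.
Qed.

Lemma line_delta_inj (j l : 'I_n) : line 'e_j = line 'e_l -> j = l.
Proof.
move=> jl; have [c /rowP/(_ j)] : line 'e_l 'e_j by rewrite -jl; exists 1; rewrite scale1r.
rewrite !mxE !eqxx /=; case: eqP => // _ /eqP.
by rewrite mulr0 oner_eq0.
Qed.

Lemma delta_basis : is_basis (fun j : 'I_n => 'e_j : 'rV[K]_n).
Proof.
have coordE (c : 'I_n -> K) : \sum_j c j *: 'e_j = \row_j c j :> 'rV[K]_n.
  by rewrite -[RHS]mulmx1 mulmx_sum_row; under [RHS]eq_bigr do rewrite row1 mxE.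
split=> [v|c c' cc' j]; first by exists (fun j => v 0 j); apply: row_sum_delta.
by move/rowP/(_ j): cc'; rewrite !coordE !mxE.
Qed.

Lemma delta_basis_line (j : 'I_n) : is_basis_line (line 'e_j).
Proof. by exists n, (fun j : 'I_n => 'e_j), j; split; [apply: delta_basis | ]. Qed.

Lemma basis_line_delta L : is_basis_line L -> exists j : 'I_n, L = line 'e_j.
Proof.
case=> m [b [i [[b_span b_uniq] Lb]]].
pose B : 'M[K]_(m, n) := \matrix_i b i.
have rowsB (u : 'rV[K]_m) : \sum_i u 0 i *: b i = u *m B.
  by rewrite mulmx_sum_row; apply: eq_bigr => i' _; rewrite rowK.
have [c cE] := choice (fun j : 'I_n => b_span 'e_j).
pose C : 'M[K]_(n, m) := \matrix_(j, i) c j i.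
have CB : C *m B = 1%:M.
  apply/row_matrixP => j; rewrite row_mul row1 -rowsB (cE j).
  by apply: eq_bigr => i' _; rewrite !mxE.
have BC : B *m C = 1%:M.
  apply/row_matrixP => i'; rewrite row1; apply/rowP => i''.
  apply: b_uniq i''; rewrite !rowsB -rowE -row_mul -mulmxA CB mulmx1.
  by rewrite rowE.
have [j Bj] := monomial_of_invertible BC CB i.
have bi : b i = B i j *: 'e_j.
  rewrite -(rowK b i) -/B (row_single_support (v := row i B) (j := j)) ?mxE // => l lj.
  by apply/eqP; rewrite mxE -[_ == 0]negbK Bj (negPf lj).
have Bij : B i j != 0 by rewrite Bj.
by exists j; rewrite -(line_scale _ Bij) -bi; apply/funext => v; apply/propext/Lb.
Qed.

Section Representation.
Variables (G : Type) (mul : G -> G -> G) (one : G) (inv : G -> G).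
Variable act : G -> 'rV[K]_n -> 'rV[K]_n.
Hypotheses (Ggrp : is_group mul one inv) (actR : is_representation mul one act).

Lemma act_mulmx g v : act g v = v *m lin1_mx (act g).
Proof.
have [_ _ actD actZ] := actR.
have act0 : act g 0 = 0 by have := actZ g 0 0; rewrite !scale0r.
rewrite mulmx_sum_row {1}[v]row_sum_delta (big_morph _ (actD g) act0).
by apply: eq_bigr => l _; rewrite actZ; congr (_ *: _); apply/rowP => j; rewrite !mxE.
Qed.

Lemma act_invK g : cancel (act g) (act (inv g)).
Proof.
by have [act1 actM _ _] := actR; case: Ggrp => _ _ _ mulVg _ v; rewrite -actM mulVg act1.
Qed.

Lemma act_Kinv g : cancel (act (inv g)) (act g).
Proof.
by have [act1 actM _ _] := actR; case: Ggrp => _ _ _ _ mulgV v; rewrite -actM mulgV act1.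
Qed.

Lemma act_monomial g (j : 'I_n) : exists l, forall l', (act g 'e_j 0 l' != 0) = (l' == l).
Proof.
have inv_mx h h' : cancel (act h) (act h') -> lin1_mx (act h) *m lin1_mx (act h') = 1%:M.
  by move=> hK; apply/row_matrixP => i; rewrite row_mul row1 rowE -!act_mulmx hK.
have [l gl] := monomial_of_invertible (inv_mx _ _ (act_invK g)) (inv_mx _ _ (act_Kinv g)) j.
by exists l => l'; rewrite -gl mxE.
Qed.

Definition act_perm g (j : 'I_n) : 'I_n := sval (cid (act_monomial g j)).

Lemma act_permP g j l : (act g 'e_j 0 l != 0) = (l == act_perm g j).
Proof. exact: (svalP (cid (act_monomial g j))). Qed.

Lemma act_perm_coef_neq0 g j : act g 'e_j 0 (act_perm g j) != 0.
Proof. by rewrite act_permP. Qed.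

Lemma act_delta g j : act g 'e_j = act g 'e_j 0 (act_perm g j) *: 'e_(act_perm g j).
Proof. by apply: row_single_support => l; rewrite -act_permP => /negPn/eqP. Qed.

Lemma act_perm_eq g j l : act g 'e_j 0 l != 0 -> act_perm g j = l.
Proof. by rewrite act_permP => /eqP. Qed.

Lemma act_perm1 j : act_perm one j = j.
Proof. by apply: act_perm_eq; have [-> _ _ _] := actR; rewrite row_deltaE eqxx oner_neq0. Qed.

Lemma act_permM g h j : act_perm (mul g h) j = act_perm g (act_perm h j).
Proof.
apply: act_perm_eq; have [_ -> _ actZ] := actR.
by rewrite act_delta actZ mxE semifield_mulf_eq0 negb_or !act_perm_coef_neq0.
Qed.

Lemma act_permK g j : act_perm (inv g) (act_perm g j) = j.
Proof. by rewrite -act_permM; case: Ggrp => _ _ _ -> _; apply: act_perm1. Qed.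

Definition act_stable J := forall g, {in J, forall l, act_perm g l \in J}.

Lemma act_stableI A B : act_stable A -> act_stable B -> act_stable (A :&: B).
Proof. by move=> stA stB g l; rewrite !inE => /andP[/stA-> /stB->]. Qed.

Lemma act_stableC J : act_stable J -> act_stable (~: J).
Proof. by move=> stJ g l; rewrite !inE; apply: contra => /(stJ (inv g)); rewrite act_permK. Qed.

Lemma coord_subrep J : act_stable J -> is_subrep act (coord_submod J).
Proof.
move=> stJ; split=> [|g v Jv l]; first exact: coord_submodule.
rewrite act_mulmx mxE; apply: contraR => lJ; apply/eqP; apply: big1 => j _.
have [->|/Jv/(stJ g) gjJ] := eqVneq (v 0 j) 0; first by rewrite mul0r.
have /negPf : l != act_perm g j by apply: contraNneq lJ => ->.
by rewrite -act_permP mxE => /negbFE/eqP->; rewrite mulr0.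
Qed.

Lemma subrep_delta_act W g j : is_subrep act W -> W 'e_j -> W 'e_(act_perm g j).
Proof.
case=> Wsub Wact Wj; apply: (submod_scaleK Wsub (act_perm_coef_neq0 g j)).
by rewrite -act_delta; apply: Wact.
Qed.

Lemma subrep_coord_stable W J : is_subrep act W -> W = coord_submod J -> act_stable J.
Proof.
move=> Wrep WJ g l /coord_submod_delta; rewrite -WJ => /(subrep_delta_act g Wrep).
by rewrite WJ => /coord_submod_delta.
Qed.

Lemma act_line_line g v : act_line act g (line v) = line (act g v).
Proof.
have [_ _ _ actZ] := actR; apply/funext => w; apply/propext.
split=> [[_ [[c ->] ->]]|[c ->]]; first by exists c; rewrite actZ.
by exists (c *: v); split; [exists c | rewrite actZ].
Qed.

Lemma act_line_delta g j : act_line act g (line 'e_j) = line 'e_(act_perm g j).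
Proof. by rewrite act_line_line act_delta line_scale ?act_perm_coef_neq0. Qed.

Definition orbit_of (i : 'I_n) : {set 'I_n} := [set l | `[< exists g, act_perm g i = l >]].

Lemma orbit_ofP i l : reflect (exists g, act_perm g i = l) (l \in orbit_of i).
Proof. by rewrite inE; apply: asboolP. Qed.

Lemma orbit_of_refl i : i \in orbit_of i.
Proof. by apply/orbit_ofP; exists one; apply: act_perm1. Qed.

Lemma orbit_of_stable i : act_stable (orbit_of i).
Proof. by move=> g l /orbit_ofP[h <-]; apply/orbit_ofP; exists (mul g h); apply: act_permM. Qed.

Lemma orbit_of_sub J i : act_stable J -> i \in J -> orbit_of i \subset J.
Proof. by move=> stJ iJ; apply/subsetP => l /orbit_ofP[g <-]; apply: stJ. Qed.

Lemma orbit_of_eq i l : l \in orbit_of i -> orbit_of l = orbit_of i.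
Proof.
move=> li; apply/eqP.
rewrite eqEsubset (orbit_of_sub (orbit_of_stable (i := i)) li).
rewrite (orbit_of_sub (orbit_of_stable (i := l))) //.
by case/orbit_ofP: li => g <-; apply/orbit_ofP; exists (inv g); apply: act_permK.
Qed.

Lemma coord_orbit_indecomposable i : indecomposable act (coord_submod (orbit_of i)).
Proof.
split; [exact/coord_subrep/orbit_of_stable | exact/coord_submod_nonzero/orbit_of_refl |].
case=> W1 [W2 [W1rep W2rep [v1 [W1v1 v1n0]] [v2 [W2v2 v2n0]] dsW]].
have [inc1 inc2 dec uniq] := dsW.
have [[W1sub _] [W2sub _]] := (W1rep, W2rep).
have meet0 v : W1 v -> W2 v -> v = 0.
  have [[W10 _ _] [W20 _ _]] := (W1sub, W2sub).
  by move=> W1v W2v; have [] := uniq v 0 0 v W1v W20 W10 W2v; rewrite ?addr0 ?add0r.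
have fill W : is_subrep act W -> W 'e_i -> forall v, coord_submod (orbit_of i) v -> W v.
  move=> Wrep Wi v Ov; apply: submod_of_deltas Wrep.1 _ => l /Ov /orbit_ofP[g <-].
  exact: subrep_delta_act.
have [a [b [W1a W2b ab]]] := dec _ ((coord_submod_delta _ _).2 (orbit_of_refl i)).
case: (delta_in_summand2 W1sub W2sub W1a W2b (esym ab)) => [W1i|W2i].
- by move: v2n0; rewrite (meet0 v2 (fill _ W1rep W1i _ (inc2 _ W2v2)) W2v2) eqxx.
- by move: v1n0; rewrite (meet0 v1 W1v1 (fill _ W2rep W2i _ (inc1 _ W1v1))) eqxx.
Qed.

Lemma coord_indecomposable_orbit J :
  act_stable J -> indecomposable act (coord_submod J) -> exists i, J = orbit_of i.
Proof.
move=> stJ [_ [v [Jv /row_neq0P[i vi]]] Jindec]; have iJ := Jv i vi.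
exists i; apply/eqP; rewrite eqEsubset orbit_of_sub // andbT.
apply/subsetP => l lJ; apply: contraT => liO; exfalso; apply: Jindec.
exists (coord_submod (J :&: orbit_of i)), (coord_submod (J :&: ~: orbit_of i)); split.
- exact/coord_subrep/act_stableI/orbit_of_stable.
- exact/coord_subrep/act_stableI/act_stableC/orbit_of_stable.
- by apply: (coord_submod_nonzero (j := i)); rewrite in_setI iJ orbit_of_refl.
- by apply: (coord_submod_nonzero (j := l)); rewrite in_setI in_setC lJ.
- exact: direct_sum2_coord.
Qed.

Lemma indecomposable_fullV_transitive :
  indecomposable act (@fullV K n) <-> transitive_on_basis_lines act.
Proof.
have -> : @fullV K n = coord_submod setT.
  by apply/funext => v; apply/propext; split=> // _ l; rewrite in_setT.
have stT : act_stable setT by move=> g l _; rewrite in_setT.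
split=> [indT | [[L /basis_line_delta[j _]] trans]].
- have [i Ti] := coord_indecomposable_orbit stT indT.
  split; first by exists (line 'e_i); apply: delta_basis_line.
  move=> L1 L2 /basis_line_delta[j1 ->] /basis_line_delta[j2 ->].
  have : j2 \in orbit_of j1 by rewrite (orbit_of_eq (i := i)) -Ti inE.
  by case/orbit_ofP => g <-; exists g; rewrite act_line_delta.
- have -> : setT = orbit_of j; last exact: coord_orbit_indecomposable.
  apply/esym/setP => l; rewrite in_setT; apply/orbit_ofP.
  have [g gjl] := trans _ _ (delta_basis_line j) (delta_basis_line l).
  exists g; apply/line_delta_inj; rewrite -act_line_delta.
  by apply/funext => v; apply/propext; rewrite gjl.
Qed.

Lemma orbit_decomposition : exists k (Ws : 'I_k -> 'rV[K]_n -> Prop),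
  (forall j, indecomposable act (Ws j)) /\ direct_sum (@fullV K n) Ws.
Proof.
pose orbits := [set orbit_of i | i : 'I_n].
have orbitsP i : orbit_of i \in orbits by apply: imset_f.
pose idx i : 'I_#|orbits| := enum_rank_in (orbitsP i) (orbit_of i).
have enum_idx (j : 'I_#|orbits|) l : (l \in (enum_val j : {set 'I_n})) = (idx l == j).
  apply/idP/eqP => [|<-]; last by rewrite enum_rankK_in ?orbit_of_refl.
  have /imsetP[i _ ji] := enum_valP j.
  rewrite ji => li; apply: enum_val_inj.
  by rewrite /idx enum_rankK_in ?orbitsP // (orbit_of_eq li) ji.
exists #|orbits|, (fun j => coord_submod (enum_val j)); split.
  by move=> j; have /imsetP[i _ ->] := enum_valP j; apply: coord_orbit_indecomposable.
have -> : (fun j => coord_submod (enum_val j)) = fun j => coord_submod [set l | idx l == j].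
  by apply/funext => j; congr coord_submod; apply/setP => l; rewrite inE enum_idx.
exact: direct_sum_coord.
Qed.

Lemma indecomposable_summands_orbits k (Ws : 'I_k -> 'rV[K]_n -> Prop) :
  (forall j, indecomposable act (Ws j)) -> direct_sum (@fullV K n) Ws ->
  (forall j, exists i, Ws j = coord_submod (orbit_of i)) /\
  (forall i, exists j, Ws j = coord_submod (orbit_of i)).
Proof.
move=> Wind dsW; have Wsub j : is_submodule (Ws j) by case: (Wind j) => [[]].
have [owner Wowner] := direct_sum_coord_summands Wsub dsW.
have Worbit j : exists i, Ws j = coord_submod (orbit_of i).
  have [Wrep _ _] := Wind j.
  have Jst := subrep_coord_stable Wrep (Wowner j).
  have [|i Ji] := coord_indecomposable_orbit Jst; first by rewrite -Wowner.
  by exists i; rewrite Wowner Ji.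
split=> // i; exists (owner i); have [i' Wi'] := Worbit (owner i).
suff /orbit_of_eq-> : i \in orbit_of i' by [].
by apply/coord_submod_delta; rewrite -Wi' Wowner; apply/coord_submod_delta; rewrite inE.
Qed.

Lemma indecomposable_decompositions_match k k'
    (Ws : 'I_k -> 'rV[K]_n -> Prop) (Ws' : 'I_k' -> 'rV[K]_n -> Prop) :
  (forall j, indecomposable act (Ws j)) -> direct_sum (@fullV K n) Ws ->
  (forall j, indecomposable act (Ws' j)) -> direct_sum (@fullV K n) Ws' ->
  (forall j, exists j', forall v, Ws j v <-> Ws' j' v) /\
  (forall j', exists j, forall v, Ws j v <-> Ws' j' v).
Proof.
move=> /indecomposable_summands_orbits/[apply] [[Worb orbW]].
move=> /indecomposable_summands_orbits/[apply] [[Worb' orbW']].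
split=> [j|j'].
- by have [i ->] := Worb j; have [j' Wj'] := orbW' i; exists j' => v; rewrite Wj'.
- by have [i ->] := Worb' j'; have [j Wj] := orbW i; exists j => v; rewrite Wj.
Qed.

End Representation.
End Semifield.

Theorem proposition3p10 (K : comNzSemiRingType) (G : Type) (mul : G -> G -> G)
    (one : G) (inv : G -> G) (n : nat) (act : G -> 'rV[K]_n -> 'rV[K]_n) :
  semifield K -> zero_sum_free K -> is_group mul one inv ->
  is_representation mul one act ->
  (indecomposable act (@fullV K n) <-> transitive_on_basis_lines act) /\
  (exists (k : nat) (Ws : 'I_k -> 'rV[K]_n -> Prop),
     [/\ (forall j, indecomposable act (Ws j)),
         direct_sum (@fullV K n) Ws &
         forall (k' : nat) (Ws' : 'I_k' -> 'rV[K]_n -> Prop),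
           (forall j, indecomposable act (Ws' j)) -> direct_sum (@fullV K n) Ws' ->
           (forall j, exists j', forall v, Ws j v <-> Ws' j' v) /\
           (forall j', exists j, forall v, Ws j v <-> Ws' j' v)]).
Proof.
move=> sfK zsfK Ggrp actR.
split; first exact: (indecomposable_fullV_transitive sfK zsfK Ggrp actR).
have [k [Ws [Wind dsW]]] := orbit_decomposition sfK zsfK Ggrp actR.
exists k, Ws; split=> // k' Ws' Wind' dsW'.
exact: (indecomposable_decompositions_match sfK zsfK Ggrp actR Wind dsW Wind' dsW').
Qed.
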